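(* Suppose $|\hat\tau(u)-\tau(u)|\le\rho$ for every unit $u$, and let $\mathcal U_{\mathsf{LTK}}$ be the output of the LEA algorithm. Let $A_1=(\tau_K+2\rho,1]$, $K_1=|\{u:\tau(u)\in A_1\}|$, $K_0=K-K_1$, and $V(A_1)=\sum_{u:\tau(u)\in A_1}\tau(u)$. Then $$\frac{V_{\mathcal U_{\mathsf{LTK}}}([0,1])}{V_{\mathcal U^*}([0,1])}\ \ge\ 1-\frac{4\rho K_0}{V(A_1)+(\tau_K+2\rho)K_0}.$$
   Context: There are $M$ units with pairwise distinct treatment effects $\tau(u)\in[0,1]$ and a budget $K\in\{1,\dots,M\}$; $\tau_K$ is the $K$-th largest value of $\tau(u)$; $\mathcal U^*$ is the set of the $K$ units with the largest $\tau(u)$. For a set $S$ of units and an interval $A\subseteq[0,1]$, $V_S(A)=\sum_{u\in S,\,\tau(u)\in A}\tau(u)$. The LEA algorithm with parameters $\epsilon,\delta,\gamma>0$ sets $\rho=\gamma\sqrt\epsilon$, obtains for each unit an estimate $\hat\tau(u)$ (accurate to within $\rho$ with probability at least $1-\delta/M$), and outputs $\mathcal U_{\mathsf{LTK}}$, the $K$ units with largest $\hat\tau(u)$. *)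

From mathcomp Require Import all_boot all_order all_algebra.
Set Implicit Arguments. Unset Strict Implicit. Unset Printing Implicit Defensive.
Import Order.TTheory GRing.Theory Num.Theory.
Local Open Scope ring_scope.

Definition kth_largest (R : realDomainType) (T : finType) (f : T -> R)
  (K : nat) (t : R) : Prop :=
  exists u, t = f u /\ #|[set v | t < f v]| = K.-1.

Definition topK (R : realDomainType) (T : finType) (f : T -> R)
  (K : nat) (S : {set T}) : Prop :=
  #|S| = K /\ (forall u v, u \in S -> v \notin S -> f v <= f u).

Definition V (R : realDomainType) (T : finType) (tau : T -> R)
  (S : {set T}) (A : interval R) : R :=
  \sum_(u in S | tau u \in A) tau u.

From mathcomp Require Import all_boot all_order all_algebra.
From mathcomp Require Import zify ring lra.
Set Implicit Arguments.
Unset Strict Implicit.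
Unset Printing Implicit Defensive.
Import Order.TTheory GRing.Theory Num.Theory.
Local Open Scope ring_scope.

(* A unit with effect above tK + 2 rho has estimate above tK + rho.  Were it
   left out of U_LTK, the K units of U_LTK would all have estimates above
   tK + rho, hence effects above tK, whereas only K - 1 units do.  So the K1
   units of A1 lie in both U_LTK and U*.  Each of the K0 other units of U_LTK
   has an estimate at least that of some unit of U* (effect >= tK) which it
   displaced, hence effect >= tK - 2 rho; the K0 other units of U* have effects
   in [tK, tK + 2 rho].  So the ratio is at least
   (V(A1) + (tK - 2 rho) K0) / (V(A1) + (tK + 2 rho) K0). *)

Lemma ler_div_sandwich (R : realFieldType) (N L U D : R) :
  0 < D -> 0 <= L -> 0 <= U -> N <= L -> N <= U -> U <= D -> N / D <= L / U.
Proof.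
move=> D_gt0 L_ge0 U_ge0 NL NU UD.
have [U0|U_neq0] := eqVneq U 0.
  by rewrite U0 invr0 mulr0 pmulr_lle0 ?invr_gt0 // -U0.
have U_gt0 : 0 < U by rewrite lt_def U_neq0 U_ge0.
rewrite ler_pdivrMr // mulrAC ler_pdivlMr //; nra.
Qed.

Section SumBounds.
Variables (R : numDomainType) (T : finType) (A : {set T}) (a : R) (F : T -> R).

Lemma ler_card_sum : (forall u, u \in A -> a <= F u) ->
  a * #|A|%:R <= \sum_(u in A) F u.
Proof. by move=> aF; rewrite mulr_natr -sumr_const; apply: ler_sum. Qed.

Lemma ler_sum_card : (forall u, u \in A -> F u <= a) ->
  \sum_(u in A) F u <= a * #|A|%:R.
Proof. by move=> Fa; rewrite mulr_natr -sumr_const; apply: ler_sum. Qed.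

End SumBounds.

Lemma V_setT (R : realDomainType) (T : finType) (tau : T -> R) (A : interval R) :
  V tau [set: T] A = \sum_(u in [set u | tau u \in A]) tau u.
Proof. by apply: eq_bigl => u; rewrite !inE. Qed.

Section TopK.
Variables (R : realDomainType) (T : finType) (f : T -> R) (K : nat) (S : {set T}).
Hypothesis S_top : topK f K S.

Lemma topK_notin_card u : u \notin S -> (K <= #|[set v | (f u <= f v)%R]|)%N.
Proof.
case: S_top => <- top uS; apply: subset_leq_card.
by apply/subsetP => v vS; rewrite inE top.
Qed.

Lemma topK_mem_inj u : injective f ->
  (#|[set v | (f u < f v)%R]| < K)%N -> u \in S.
Proof.
case: S_top => <- top f_inj; apply: contraTT => uS; rewrite -leqNgt.
apply: subset_leq_card; apply/subsetP => v vS.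
have vu : v != u by apply: contraNneq uS => <-.
by rewrite inE lt_neqAle (inj_eq f_inj) eq_sym vu top.
Qed.

Lemma topK_exists_le (S' : {set T}) v : #|S'| = K -> v \in S ->
  exists2 w, w \in S' & f w <= f v.
Proof.
case: S_top => cardS top cardS' vS.
have [vS'|vS'] := boolP (v \in S'); first by exists v.
have : ~~ (S' \subset S).
  apply: contraNN vS' => sub.
  suff -> : S' = S by [].
  by apply/eqP; rewrite eqEcard sub cardS cardS' leqnn.
by case/subsetPn => w wS' wS; exists w; rewrite // top.
Qed.

Lemma topK_kth_largest t : injective f -> (0 < K)%N -> kth_largest f K t ->
  S = [set v | t <= f v].
Proof.
move=> f_inj K_gt0 [u0 [-> card_gt]].
have ge_sub : [set v | f u0 <= f v] \subset S.
  apply/subsetP => u; rewrite inE => le_u; apply: topK_mem_inj => //.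
  rewrite -(prednK K_gt0) ltnS -card_gt; apply: subset_leq_card.
  by apply/subsetP => v; rewrite !inE; apply: le_lt_trans.
have ge_eq : [set v | f u0 <= f v] = u0 |: [set v | f u0 < f v].
  by apply/setP => v; rewrite !inE le_eqVlt (inj_eq f_inj) eq_sym.
apply/esym/eqP; rewrite eqEcard ge_sub ge_eq cardsU1 card_gt inE ltxx.
by case: S_top => -> _ /=; lia.
Qed.

End TopK.

Section LTKValue.
Variables (R : realFieldType) (T : finType) (K : nat) (tau tauhat : T -> R).
Variables (rho tK : R) (Ustar ULTK : {set T}).
Hypotheses (tau_inj : injective tau) (tau01 : forall u, 0 <= tau u <= 1).
Hypotheses (K_gt0 : (0 < K)%N) (rho_gt0 : 0 < rho).
Hypothesis tauhat_near : forall u, `|tauhat u - tau u| <= rho.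
Hypothesis tK_kth : kth_largest tau K tK.
Hypotheses (Ustar_top : topK tau K Ustar) (ULTK_top : topK tauhat K ULTK).

Let A1 := `]tK + 2 * rho, 1].
Let S1 := [set u | tau u \in A1].
Let K0 : R := K%:R - #|S1|%:R.
Let V1 := V tau [set: T] A1.

Let tauhat_bounds u : tau u - rho <= tauhat u <= tau u + rho.
Proof.
by move: (tauhat_near u); rewrite ler_norml => /andP[? ?]; apply/andP; split; lra.
Qed.

Let mem_S1 u : (u \in S1) = (tK + 2 * rho < tau u).
Proof. by rewrite inE in_itv /=; case/andP: (tau01 u) => _ ->; rewrite andbT. Qed.

Let tK_ge0 : 0 <= tK.
Proof. by case: tK_kth => u [-> _]; case/andP: (tau01 u). Qed.

Let card_above_tK : #|[set v | tK < tau v]| = K.-1.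
Proof. by case: tK_kth => u [_ ->]. Qed.

Lemma mem_Ustar u : (u \in Ustar) = (tK <= tau u).
Proof. by rewrite (topK_kth_largest Ustar_top tau_inj K_gt0 tK_kth) inE. Qed.

Lemma S1_sub_Ustar : S1 \subset Ustar.
Proof. by apply/subsetP => u; rewrite mem_S1 mem_Ustar; have := rho_gt0; lra. Qed.

Lemma S1_sub_ULTK : S1 \subset ULTK.
Proof.
apply/subsetP => u; rewrite mem_S1 => u_high; apply/negPn/negP => uL.
have : (K <= #|[set v | (tK < tau v)%R]|)%N.
  apply: leq_trans (topK_notin_card ULTK_top uL) (subset_leq_card _).
  apply/subsetP => v; rewrite !inE => le_uv.
  by case/andP: (tauhat_bounds u) => ? ?; case/andP: (tauhat_bounds v) => ? ?; lra.
by rewrite card_above_tK; lia.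
Qed.

Lemma ULTK_lower v : v \in ULTK -> tK - 2 * rho <= tau v.
Proof.
case: Ustar_top => cardU _ vL.
have [w wU le_wv] := topK_exists_le ULTK_top cardU vL.
move: wU; rewrite mem_Ustar => tK_w.
by case/andP: (tauhat_bounds v) => ? ?; case/andP: (tauhat_bounds w) => ? ?; lra.
Qed.

Let V01 (S : {set T}) : V tau S `[0, 1] = \sum_(u in S) tau u.
Proof. by apply: eq_bigl => u; rewrite in_itv /= tau01 andbT. Qed.

Let V_split (S : {set T}) : S1 \subset S ->
  \sum_(u in S) tau u = V1 + \sum_(u in S :\: S1) tau u.
Proof. by move=> sub; rewrite (big_setID S1) /= (setIidPr sub) /V1 V_setT. Qed.

Let K0_card (S : {set T}) : S1 \subset S -> #|S| = K -> K0 = #|S :\: S1|%:R.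
Proof.
move=> sub cardS; rewrite cardsDS // cardS natrB // -cardS.
exact: subset_leq_card.
Qed.

Lemma V_ULTK_ge : V1 + (tK - 2 * rho) * K0 <= V tau ULTK `[0, 1].
Proof.
case: ULTK_top => cardL _.
rewrite V01 V_split ?S1_sub_ULTK // lerD2l (K0_card S1_sub_ULTK cardL).
by apply: ler_card_sum => u /setDP[/ULTK_lower].
Qed.

Lemma V_Ustar_ge : V1 + tK * K0 <= V tau Ustar `[0, 1].
Proof.
case: Ustar_top => cardU _.
rewrite V01 V_split ?S1_sub_Ustar // lerD2l (K0_card S1_sub_Ustar cardU).
by apply: ler_card_sum => u /setDP[]; rewrite mem_Ustar.
Qed.

Lemma V_Ustar_le : V tau Ustar `[0, 1] <= V1 + (tK + 2 * rho) * K0.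
Proof.
case: Ustar_top => cardU _.
rewrite V01 V_split ?S1_sub_Ustar // lerD2l (K0_card S1_sub_Ustar cardU).
by apply: ler_sum_card => u /setDP[_]; rewrite mem_S1 -leNgt.
Qed.

Lemma V_bound_denom_gt0 : 0 < V1 + (tK + 2 * rho) * K0.
Proof.
have V1_ge : (tK + 2 * rho) * #|S1|%:R <= V1.
  by rewrite /V1 V_setT; apply: ler_card_sum => u; rewrite mem_S1 => /ltW.
have K_ge1 : 1 <= K%:R :> R by rewrite ler1n.
suff : 0 < (tK + 2 * rho) * K%:R by rewrite /K0; lra.
by apply: mulr_gt0; move: tK_ge0 rho_gt0; lra.
Qed.

Lemma LTK_value_ratio_ge :
  V tau ULTK `[0, 1] / V tau Ustar `[0, 1]
    >= 1 - (4 * rho * K0) / (V1 + (tK + 2 * rho) * K0).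
Proof.
have D_gt0 := V_bound_denom_gt0.
have [cardU _] := Ustar_top.
have K0_ge0 : 0 <= K0 by rewrite (K0_card S1_sub_Ustar cardU) ler0n.
have rhoK0_ge0 : 0 <= rho * K0 := mulr_ge0 (ltW rho_gt0) K0_ge0.
have V_ge0 S : 0 <= V tau S `[0, 1].
  by rewrite V01; apply: sumr_ge0 => u _; case/andP: (tau01 u).
have -> : 1 - 4 * rho * K0 / (V1 + (tK + 2 * rho) * K0) =
          (V1 + (tK - 2 * rho) * K0) / (V1 + (tK + 2 * rho) * K0).
  by field; rewrite gt_eqF.
apply: ler_div_sandwich; rewrite ?V_ge0 ?V_ULTK_ge ?V_Ustar_le //.
by apply: le_trans V_Ustar_ge; lra.
Qed.

End LTKValue.

Theorem claim2 (R : rcfType) (M K : nat) (tau tauhat : 'I_M -> R)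
  (eps delta gamma tK : R) (Ustar ULTK : {set 'I_M}) :
  injective tau ->
  (forall u, 0 <= tau u <= 1) ->
  (0 < K)%N -> (K <= M)%N ->
  0 < eps -> 0 < delta -> 0 < gamma ->
  let rho := gamma * Num.sqrt eps in
  (forall u, `|tauhat u - tau u| <= rho) ->
  kth_largest tau K tK ->
  topK tau K Ustar ->
  topK tauhat K ULTK ->
  let A1 := `]tK + 2 * rho, 1] in
  let K1 := #|[set u | tau u \in A1]| in
  let K0 := K%:R - K1%:R in
  V tau ULTK `[0, 1] / V tau Ustar `[0, 1]
    >= 1 - (4 * rho * K0) / (V tau [set: 'I_M] A1 + (tK + 2 * rho) * K0).
Proof.
move=> tau_inj tau01 K_gt0 _ eps_gt0 _ gamma_gt0 rho tauhat_near tK_kth.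
move=> Ustar_top ULTK_top.
have rho_gt0 : 0 < rho by rewrite mulr_gt0 ?sqrtr_gt0.
exact: LTK_value_ratio_ge.
Qed.
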